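(* Let $h:\mathbb{R}\to\mathbb{R}$ be any of the following functions: the sigmoid $h(x)=1/(1+e^{-x})$; $h=\tanh$; $h=\arctan$; the quadratic $h(x)=x^2$; or $h(x)=\lambda x$ for $x\ge0$ and $h(x)=\lambda\alpha(e^x-1)$ for $x<0$, with $\alpha>0$ and either $\lambda=1$ (ELU) or $\lambda>1$ (SELU). Then: (i) there exist $v_1,v_2,v_3,v_4\in\mathbb{R}$ with $h(v_1)h(v_4)=h(v_2)h(v_3)$ and $h(v_1)h\!\left(\frac{v_3+v_4}{2}\right)\ne h(v_3)h\!\left(\frac{v_1+v_2}{2}\right)$; and (ii) there exist $v_1,v_2,u_1,u_2\in\mathbb{R}$ such that $u_1h(v_1)+u_2h(v_2)=\tfrac13$; $h$ is infinitely differentiable at $v_1$ and $v_2$; there is $c>0$ with $|h^{(n)}(v_1)|\le c^nn!$ and $|h^{(n)}(v_2)|\le c^nn!$ for all $n\ge1$; $(u_1h'(v_1))^2+\frac{u_1h''(v_1)}{3}>0$; and $(u_1h'(v_1)u_2h'(v_2))^2<\big((u_1h'(v_1))^2+\frac{u_1h''(v_1)}{3}\big)\big((u_2h'(v_2))^2+\frac{u_2h''(v_2)}{3}\big)$. Consequently, for each such $h$, the one-hidden-layer network risk $\ell((W_j,b_j)_{j=1}^2)=\tfrac12\|W_2h(W_1X+b_1\mathbf{1}_3^T)+b_2\mathbf{1}_3^T-Y\|_F^2$ with $W_1\in\mathbb{R}^{2\times2}$, $b_1\in\mathbb{R}^2$, $W_2\in\mathbb{R}^{1\times2}$, $b_2\in\mathbb{R}$,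 $X=\begin{bmatrix}1&0&\frac12\\0&1&\frac12\end{bmatrix}$, $Y=[0\ 0\ 1]$, has a global minimum with value $0$ and a local minimum with value $\tfrac13$.
   Context: $h^{(n)}$ denotes the $n$-th derivative of $h$; $\mathbf{1}_3$ is the all-ones vector in $\mathbb{R}^3$; $h$ is applied entrywise. *)

From Stdlib Require Import Reals.
From Coquelicot Require Import Coquelicot.
Open Scope R_scope.

Definition sigmoid (x : R) : R := 1 / (1 + exp (- x)).
Definition tanhR (x : R) : R := (exp x - exp (- x)) / (exp x + exp (- x)).
Definition quadR (x : R) : R := x ^ 2.
Definition elu (lambda alpha : R) (x : R) : R :=
  if Rle_dec 0 x then lambda * x else lambda * alpha * (exp x - 1).

Definition admissible_activation (h : R -> R) : Prop :=
  h = sigmoid \/ h = tanhR \/ h = atan \/ h = quadR \/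
  (exists lambda alpha : R, 0 < alpha /\ (lambda = 1 \/ 1 < lambda) /\
     h = elu lambda alpha).

Record params := Params {
  W1_11 : R; W1_12 : R; W1_21 : R; W1_22 : R;
  b1_1 : R; b1_2 : R;
  W2_1 : R; W2_2 : R;
  b2 : R }.

Definition net (h : R -> R) (p : params) (x1 x2 : R) : R :=
  W2_1 p * h (W1_11 p * x1 + W1_12 p * x2 + b1_1 p)
  + W2_2 p * h (W1_21 p * x1 + W1_22 p * x2 + b1_2 p) + b2 p.

(* X = [[1,0,1/2],[0,1,1/2]], Y = [0 0 1];
   risk = 1/2 || W2 h(W1 X + b1 1^T) + b2 1^T - Y ||_F^2 *)
Definition risk (h : R -> R) (p : params) : R :=
  / 2 * ( (net h p 1 0 - 0) ^ 2 + (net h p 0 1 - 0) ^ 2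
          + (net h p (1/2) (1/2) - 1) ^ 2 ).

Definition params_close (eps : R) (p p' : params) : Prop :=
  Rabs (W1_11 p' - W1_11 p) < eps /\ Rabs (W1_12 p' - W1_12 p) < eps /\
  Rabs (W1_21 p' - W1_21 p) < eps /\ Rabs (W1_22 p' - W1_22 p) < eps /\
  Rabs (b1_1 p' - b1_1 p) < eps /\ Rabs (b1_2 p' - b1_2 p) < eps /\
  Rabs (W2_1 p' - W2_1 p) < eps /\ Rabs (W2_2 p' - W2_2 p) < eps /\
  Rabs (b2 p' - b2 p) < eps.

Definition is_global_min {T : Type} (f : T -> R) (p : T) : Prop :=
  forall q, f p <= f q.

Definition is_local_min (f : params -> R) (p : params) : Prop :=
  exists eps : R, 0 < eps /\ forall q, params_close eps p q -> f p <= f q.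

Definition smooth_at (h : R -> R) (v : R) : Prop :=
  forall n : nat, ex_derive_n h n v.

(* Part (i) yields an exact interpolant: first-layer rows (v1, v2) and (v3, v4)
   with output weights proportional to (h v3, - h v1) fit all three data points.
   For part (ii) both hidden units are collapsed onto a point v where the
   constant output 1/3 is fitted, at risk 1/3.  Nearby, hidden unit i sees the
   pre-activations c_i + e_i, c_i - e_i and c_i on the three inputs, and the risk
   is at least 1/3 + D^2 + 2/3 M, where D and M are the output-weighted odd and
   even parts of h along e.  By Taylor's formula, and since the weights and
   centres move little, D and M equal the linear form sum u_i h'(v) e_i and the
   quadratic form sum u_i h''(v) e_i^2 / 2 up to errors that are small multiples
   of |e| and |e|^2.  The inequalities of (ii) say exactly that D^2 + 2/3 M is
   then a positive definite quadratic form in e, which absorbs these errors.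
   The bounds c^n n! on the derivatives come from writing the derivatives of
   sigmoid and tanh as polynomials in the function itself (both solve a
   quadratic ODE) and those of atan as polynomials times powers of 1/(1 + x^2). *)

From Stdlib Require Import Reals Lra Lia Psatz List.
From Coquelicot Require Import Coquelicot.
Open Scope R_scope.

(** * Polynomials as coefficient lists *)

Fixpoint peval (p : list R) (x : R) : R :=
  match p with nil => 0 | a :: q => a + x * peval q x end.

Fixpoint padd (p q : list R) : list R :=
  match p, q with
  | nil, _ => q
  | _, nil => p
  | a :: p', b :: q' => (a + b) :: padd p' q'
  end.

Definition pscal (a : R) (p : list R) : list R := map (Rmult a) p.

Fixpoint pmul (p q : list R) : list R :=
  match p with nil => nil | a :: p' => padd (pscal a q) (0 :: pmul p' q) end.

Fixpoint pder (p : list R) : list R :=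
  match p with nil => nil | _ :: q => padd q (0 :: pder q) end.

Fixpoint norm1 (p : list R) : R :=
  match p with nil => 0 | a :: q => Rabs a + norm1 q end.

Lemma peval_padd p q x : peval (padd p q) x = peval p x + peval q x.
Proof.
  revert q; induction p as [|a p IH]; intros [|b q]; simpl; try ring.
  rewrite IH; ring.
Qed.

Lemma peval_pscal a p x : peval (pscal a p) x = a * peval p x.
Proof.
  unfold pscal; induction p as [|b p IH]; simpl; [ring|].
  rewrite IH; ring.
Qed.

Lemma peval_pmul p q x : peval (pmul p q) x = peval p x * peval q x.
Proof.
  induction p as [|a p IH]; simpl; [ring|].
  rewrite peval_padd, peval_pscal; simpl; rewrite IH; ring.
Qed.

Lemma Derive_of_is_derive (f : R -> R) x l : is_derive f x l -> Derive (fun y => f y) x = l.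
Proof. apply is_derive_unique. Qed.

Lemma is_derive_peval p x : is_derive (peval p) x (peval (pder p) x).
Proof.
  induction p as [|a p IH]; simpl.
  - exact (is_derive_const 0 x).
  - rewrite peval_padd; simpl.
    auto_derive; [eexists; exact IH|].
    rewrite (Derive_of_is_derive _ _ _ IH); ring.
Qed.

Lemma norm1_nonneg p : 0 <= norm1 p.
Proof. induction p; simpl; [lra|]. pose proof (Rabs_pos a); lra. Qed.

Lemma norm1_padd p q : norm1 (padd p q) <= norm1 p + norm1 q.
Proof.
  revert q; induction p as [|a p IH]; intros [|b q]; simpl; try lra.
  pose proof (Rabs_triang a b); pose proof (IH q); lra.
Qed.

Lemma norm1_pscal a p : norm1 (pscal a p) = Rabs a * norm1 p.
Proof.
  unfold pscal; induction p as [|b p IH]; simpl; [ring|].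
  rewrite IH, Rabs_mult; ring.
Qed.

Lemma norm1_pmul p q : norm1 (pmul p q) <= norm1 p * norm1 q.
Proof.
  induction p as [|a p IH]; simpl; [lra|].
  eapply Rle_trans; [apply norm1_padd|].
  rewrite norm1_pscal; simpl; rewrite Rabs_R0.
  pose proof (norm1_nonneg q); lra.
Qed.

Lemma norm1_pder p : norm1 (pder p) <= INR (length p) * norm1 p.
Proof.
  induction p as [|a p IH]; [simpl; lra|].
  change (length (a :: p)) with (S (length p)); rewrite S_INR; simpl.
  eapply Rle_trans; [apply norm1_padd|]; simpl; rewrite Rabs_R0.
  pose proof (norm1_nonneg p); pose proof (Rabs_pos a); pose proof (pos_INR (length p)).
  nra.
Qed.

Lemma peval_bound p x : Rabs x <= 1 -> Rabs (peval p x) <= norm1 p.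
Proof.
  intros Hx; induction p as [|a p IH]; simpl; [rewrite Rabs_R0; lra|].
  eapply Rle_trans; [apply Rabs_triang|]; rewrite Rabs_mult.
  pose proof (Rabs_pos x); pose proof (Rabs_pos (peval p x)); nra.
Qed.

Lemma length_padd p q : length (padd p q) = Nat.max (length p) (length q).
Proof. revert q; induction p as [|a p IH]; intros [|b q]; simpl; auto. Qed.

Lemma length_pder p : (length (pder p) <= length p)%nat.
Proof. induction p as [|a p IH]; simpl; [lia|]. rewrite length_padd; simpl; lia. Qed.

Lemma length_pmul p q : (length (pmul p q) <= length p + length q)%nat.
Proof.
  induction p as [|a p IH]; simpl; [lia|].
  rewrite length_padd; unfold pscal; rewrite length_map; simpl; lia.
Qed.

(** * Derivative families and factorial bounds *)

Definition derivative_family (h : R -> R) (f : nat -> R -> R) (v rho : R) : Prop :=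
  (forall x, Rabs (x - v) < rho -> h x = f O x) /\
  (forall n x, Rabs (x - v) < rho -> is_derive (f n) x (f (S n) x)).

Definition cauchy_bounded (f : nat -> R -> R) (v : R) : Prop :=
  exists c, 0 < c /\
    forall n, (1 <= n)%nat -> Rabs (f n v) <= c ^ n * INR (Factorial.fact n).

Lemma locally_open_ball v rho x : Rabs (x - v) < rho -> locally x (fun t => Rabs (t - v) < rho).
Proof.
  intros Hx.
  assert (Hr : 0 < rho - Rabs (x - v)) by lra.
  exists (mkposreal _ Hr); intros y Hy.
  change (Rabs (y - x) < rho - Rabs (x - v)) in Hy.
  replace (y - v) with ((y - x) + (x - v)) by ring.
  pose proof (Rabs_triang (y - x) (x - v)); lra.
Qed.

Lemma Derive_n_family h f v rho : derivative_family h f v rho ->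
  forall n x, Rabs (x - v) < rho -> Derive_n h n x = f n x /\ ex_derive_n h n x.
Proof.
  intros [H0 HS] n; induction n as [|n IH]; intros x Hx; [split; [apply H0, Hx | exact I]|].
  assert (Hloc : locally x (fun t => Derive_n h n t = f n t)).
  { eapply filter_imp; [|apply (locally_open_ball v rho x Hx)]; intros t Ht; apply IH, Ht. }
  split; simpl.
  - rewrite (Derive_ext_loc _ (f n) x Hloc); apply is_derive_unique, HS, Hx.
  - apply (ex_derive_ext_loc (f n)); [eapply filter_imp; [|exact Hloc]; intros t Ht; auto|].
    eexists; apply HS, Hx.
Qed.

Lemma factorial_growth (a : nat -> R) (c : R) : 0 <= c -> a O <= 1 ->
  (forall n, a (S n) <= c * INR (S n) * a n) ->
  forall n, a n <= c ^ n * INR (Factorial.fact n).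
Proof.
  intros Hc H0 HS n; induction n as [|n IH]; [simpl; lra|].
  eapply Rle_trans; [apply HS|].
  change (Factorial.fact (S n)) with (S n * Factorial.fact n)%nat; rewrite mult_INR.
  pose proof (pos_INR (S n)).
  replace (c ^ S n * (INR (S n) * INR (Factorial.fact n)))
    with (c * INR (S n) * (c ^ n * INR (Factorial.fact n))) by (simpl; ring).
  apply Rmult_le_compat_l; [nra | exact IH].
Qed.

Section PolynomialODE.

Variables (g : R -> R) (D : list R).
Hypothesis g_ode : forall x, is_derive g x (peval D (g x)).

Fixpoint ode_poly (n : nat) : list R :=
  match n with O => 0 :: 1 :: nil | S n => pmul (pder (ode_poly n)) D end.

Definition ode_family (n : nat) (x : R) : R := peval (ode_poly n) (g x).

Lemma ode_family_derivative_family v rho : derivative_family g ode_family v rho.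
Proof.
  split; [intros x _; unfold ode_family; simpl; ring|].
  intros n x _; unfold ode_family; simpl ode_poly; rewrite peval_pmul, Rmult_comm.
  exact (is_derive_comp _ _ x _ _ (is_derive_peval _ (g x)) (g_ode x)).
Qed.

Lemma length_ode_poly n : (length (ode_poly n) <= 2 + n * length D)%nat.
Proof.
  induction n as [|n IH]; simpl; [lia|].
  pose proof (length_pmul (pder (ode_poly n)) D); pose proof (length_pder (ode_poly n)); lia.
Qed.

Lemma ode_family_cauchy v : Rabs (g v) <= 1 -> cauchy_bounded ode_family v.
Proof.
  intros Hv; set (c := INR (length D + 2) * (norm1 D + 1)).
  assert (Hc : 0 < c).
  { unfold c; pose proof (norm1_nonneg D); apply Rmult_lt_0_compat; [apply lt_0_INR; lia | lra]. }
  exists c; split; [exact Hc|]; intros n _.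
  eapply Rle_trans; [apply peval_bound, Hv|].
  apply (factorial_growth (fun n => norm1 (ode_poly n))); [lra | simpl; rewrite Rabs_R0, Rabs_R1; lra |].
  intros m; simpl ode_poly.
  eapply Rle_trans; [apply norm1_pmul|].
  pose proof (norm1_pder (ode_poly m)); pose proof (norm1_nonneg (pder (ode_poly m))).
  pose proof (norm1_nonneg (ode_poly m)); pose proof (norm1_nonneg D).
  assert (Hlen : INR (length (ode_poly m)) <= INR (length D + 2) * INR (S m)).
  { rewrite <- mult_INR; apply le_INR; pose proof (length_ode_poly m); nia. }
  assert (norm1 (pder (ode_poly m)) <= INR (length D + 2) * INR (S m) * norm1 (ode_poly m)).
  { eapply Rle_trans; [eassumption|]; apply Rmult_le_compat_r; assumption. }
  unfold c; pose proof (pos_INR (length D + 2)); pose proof (pos_INR (S m)); nra.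
Qed.

End PolynomialODE.

(* [atan^(n+1) x = atan_poly n (x) / (1 + x^2)^(n+1)]; differentiating gives the
   recursion [A_(n+1) = (1 + X^2) A_n' - 2 (n+1) X A_n]. *)
Fixpoint atan_poly (n : nat) : list R :=
  match n with
  | O => 1 :: nil
  | S m =>
      padd (padd (pder (atan_poly m)) (0 :: 0 :: pder (atan_poly m)))
           (pscal (-2 * INR (S m)) (0 :: atan_poly m))
  end.

Definition atan_family (n : nat) (x : R) : R :=
  match n with
  | O => atan x
  | S m => peval (atan_poly m) x * (/ (1 + x ^ 2)) ^ S m
  end.

Lemma atan_family_derivative_family v rho : derivative_family atan atan_family v rho.
Proof.
  split; [reflexivity|]; intros n x _.
  assert (Hx : 0 < 1 + x ^ 2) by (pose proof (pow2_ge_0 x); lra).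
  destruct n as [|m].
  - replace (atan_family 1 x) with (/ (1 + x²)) by (simpl; unfold Rsqr; field; simpl in Hx; lra).
    apply is_derive_atan.
  - assert (Hw : is_derive (fun t => / (1 + t ^ 2)) x (- (2 * x) * (/ (1 + x ^ 2)) ^ 2)).
    { auto_derive; simpl in Hx |- *; [lra | field; lra]. }
    pose proof (Derive.is_derive_mult _ _ x _ _ (is_derive_peval (atan_poly m) x)
                  (is_derive_pow _ (S m) x _ Hw)) as Hm.
    enough (E : atan_family (S (S m)) x =
                peval (pder (atan_poly m)) x * (/ (1 + x ^ 2)) ^ S m +
                peval (atan_poly m) x * (INR (S m) * (- (2 * x) * (/ (1 + x ^ 2)) ^ 2)
                                        * (/ (1 + x ^ 2)) ^ pred (S m)))
      by (rewrite E; exact Hm).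
    cbn [atan_family atan_poly]; rewrite !peval_padd, peval_pscal; cbn [peval pred pow].
    field; lra.
Qed.

Lemma length_atan_poly n : (length (atan_poly n) <= 2 * n + 1)%nat.
Proof.
  induction n as [|n IH]; [simpl; lia|]; cbn [atan_poly].
  rewrite !length_padd; unfold pscal; rewrite length_map; cbn [length].
  pose proof (length_pder (atan_poly n)); lia.
Qed.

Lemma norm1_atan_poly n : norm1 (atan_poly n) <= 6 ^ n * INR (Factorial.fact n).
Proof.
  apply (factorial_growth (fun n => norm1 (atan_poly n))); [lra | simpl; rewrite Rabs_R1; lra |].
  intros m; cbn [atan_poly].
  eapply Rle_trans; [apply norm1_padd|].
  pose proof (norm1_padd (pder (atan_poly m)) (0 :: 0 :: pder (atan_poly m))).
  rewrite norm1_pscal; cbn [norm1] in *; rewrite Rabs_R0 in *.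
  rewrite Rabs_mult, (Rabs_left (-2)), (Rabs_pos_eq (INR (S m))) by (try apply pos_INR; lra).
  pose proof (norm1_pder (atan_poly m)); pose proof (norm1_nonneg (atan_poly m)).
  assert (Hlen : INR (length (atan_poly m)) <= 2 * INR m + 1).
  { replace (2 * INR m + 1) with (INR (2 * m + 1)) by (rewrite plus_INR, mult_INR; simpl; ring).
    apply le_INR, length_atan_poly. }
  assert (norm1 (pder (atan_poly m)) <= (2 * INR m + 1) * norm1 (atan_poly m)).
  { eapply Rle_trans; [eassumption|]; apply Rmult_le_compat_r; assumption. }
  rewrite S_INR; pose proof (pos_INR m); nra.
Qed.

Lemma atan_family_cauchy v : Rabs v <= 1 -> cauchy_bounded atan_family v.
Proof.
  intros Hv; exists 6; split; [lra|]; intros [|m] Hm; [lia|]; simpl atan_family.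
  assert (Hw : 0 < / (1 + v ^ 2) <= 1).
  { pose proof (pow2_ge_0 v); split; [apply Rinv_0_lt_compat; lra|].
    rewrite <- Rinv_1; apply Rinv_le_contravar; lra. }
  assert (Hwn : Rabs ((/ (1 + v ^ 2)) ^ S m) <= 1).
  { rewrite Rabs_pos_eq by (apply pow_le; lra).
    apply Rle_trans with (1 ^ S m); [apply pow_incr; lra | rewrite pow1; lra]. }
  rewrite Rabs_mult.
  apply Rle_trans with (Rabs (peval (atan_poly m) v)).
  { rewrite <- Rmult_1_r; apply Rmult_le_compat_l; [apply Rabs_pos | exact Hwn]. }
  eapply Rle_trans; [apply peval_bound, Hv|].
  eapply Rle_trans; [apply norm1_atan_poly|].
  change (Factorial.fact (S m)) with (S m * Factorial.fact m)%nat.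
  rewrite mult_INR, S_INR; simpl pow.
  pose proof (pos_INR m); pose proof (pos_INR (Factorial.fact m)).
  assert (0 <= 6 ^ m * INR (Factorial.fact m)) by (apply Rmult_le_pos; [apply pow_le; lra | lra]).
  nra.
Qed.



(** * Local derivative bounds and Taylor estimates *)

Definition C3_bounds (h h1 h2 h3 : R -> R) (v rho K : R) : Prop :=
  forall x, Rabs (x - v) < rho ->
    is_derive h x (h1 x) /\ is_derive h1 x (h2 x) /\ is_derive h2 x (h3 x) /\
    Rabs (h1 x) <= K /\ Rabs (h2 x) <= K /\ Rabs (h3 x) <= K.

Lemma C3_bounds_nonneg h h1 h2 h3 v rho K : 0 < rho -> C3_bounds h h1 h2 h3 v rho K -> 0 <= K.
Proof.
  intros Hrho HC3; assert (Hv : Rabs (v - v) < rho) by (rewrite Rminus_eq_0, Rabs_R0; exact Hrho).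
  destruct (HC3 v Hv) as (_ & _ & _ & B1 & _); pose proof (Rabs_pos (h1 v)); lra.
Qed.

Lemma locally_bounded_of_continuous (f : R -> R) v : continuous f v ->
  locally v (fun x => Rabs (f x) <= Rabs (f v) + 1).
Proof.
  intros Hf; apply filterlim_locally with (eps := mkposreal 1 Rlt_0_1) in Hf.
  eapply filter_imp; [|exact Hf]; intros x Hx.
  change (Rabs (f x - f v) < 1) in Hx.
  pose proof (Rabs_triang_inv (f x) (f v)); lra.
Qed.

Lemma C3_bounds_of_family h f v rho : 0 < rho -> derivative_family h f v rho ->
  exists r K, 0 < r /\ C3_bounds h (f 1%nat) (f 2%nat) (f 3%nat) v r K.
Proof.
  intros Hrho [H0 HS].
  assert (Hv : Rabs (v - v) < rho) by (rewrite Rminus_eq_0, Rabs_R0; exact Hrho).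
  assert (Hcont : forall n, continuous (f n) v)
    by (intros n; apply (ex_derive_continuous (V := R_NormedModule)); eexists; apply HS, Hv).
  assert (B : forall n, locally v (fun x => Rabs (f n x) <= Rabs (f n v) + 1))
    by (intros n; apply locally_bounded_of_continuous, Hcont).
  destruct (filter_and _ _ (locally_open_ball v rho v Hv)
              (filter_and _ _ (B 1%nat) (filter_and _ _ (B 2%nat) (B 3%nat)))) as [r Hr].
  set (a1 := Rabs (f 1%nat v)) in *; set (a2 := Rabs (f 2%nat v)) in *; set (a3 := Rabs (f 3%nat v)) in *.
  exists r, (Rmax a1 (Rmax a2 a3) + 1); split; [apply cond_pos|].
  intros x Hx; destruct (Hr x Hx) as (Hxr & B1 & B2 & B3).
  pose proof (Rmax_l a1 (Rmax a2 a3)); pose proof (Rmax_r a1 (Rmax a2 a3));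
    pose proof (Rmax_l a2 a3); pose proof (Rmax_r a2 a3).
  repeat split; try apply HS; try assumption; try lra.
  apply (is_derive_ext_loc (f O)); [|apply HS, Hxr].
  eapply filter_imp; [|apply (locally_open_ball v rho x Hxr)]; intros t Ht; symmetry; apply H0, Ht.
Qed.

Lemma vanishing_order_succ (g g' : R -> R) (r C : R) (k : nat) : 0 <= C -> g 0 = 0 ->
  (forall t, Rabs t <= r -> is_derive g t (g' t)) ->
  (forall t, Rabs t <= r -> Rabs (g' t) <= C * Rabs t ^ k) ->
  forall t, Rabs t <= r -> Rabs (g t) <= C * Rabs t ^ S k.
Proof.
  intros HC H0 Hd Hb t Ht.
  destruct (MVT_cor4 g g' 0 r) with (b := t) as (xi & Heq & Hxi);
    [intros x Hx; apply Hd; rewrite Rminus_0_r in Hx; exact Hx | rewrite Rminus_0_r; exact Ht |].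
  rewrite !Rminus_0_r in *; rewrite H0, Rminus_0_r in Heq; rewrite Heq, Rabs_mult; simpl pow.
  assert (Hk : Rabs xi ^ k <= Rabs t ^ k) by (apply pow_incr; split; [apply Rabs_pos | exact Hxi]).
  replace (C * (Rabs t * Rabs t ^ k)) with (C * Rabs t ^ k * Rabs t) by ring.
  apply Rmult_le_compat_r; [apply Rabs_pos|].
  eapply Rle_trans; [apply Hb; lra|]; apply Rmult_le_compat_l; assumption.
Qed.

Lemma lipschitz_at_center (f f' : R -> R) v rho K :
  (forall x, Rabs (x - v) < rho -> is_derive f x (f' x) /\ Rabs (f' x) <= K) ->
  forall c, Rabs (c - v) < rho -> Rabs (f c - f v) <= K * Rabs (c - v).
Proof.
  intros Hf c Hc.
  destruct (MVT_cor4 f f' v (Rabs (c - v))) with (b := c) as (xi & Heq & Hxi);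
    [intros x Hx; apply Hf; lra | lra |].
  rewrite Heq, Rabs_mult; apply Rmult_le_compat_r; [apply Rabs_pos | apply Hf; lra].
Qed.

Definition odd_part (h : R -> R) (c e : R) : R := (h (c + e) - h (c - e)) / 2.
Definition even_part (h : R -> R) (c e : R) : R := (h (c + e) + h (c - e)) / 2 - h c.

Section Taylor.

Variables (h h1 h2 h3 : R -> R) (v rho K : R).
Hypothesis hC3 : C3_bounds h h1 h2 h3 v rho K.

Lemma taylor2_remainder c e : Rabs (c - v) + Rabs e < rho ->
  Rabs (h (c + e) - h c - h1 c * e - h2 c * e ^ 2 / 2) <= K * Rabs e ^ 3.
Proof.
  intros Hce.
  assert (Hball : forall t, Rabs t <= Rabs e -> Rabs (c + t - v) < rho).
  { intros t Ht; pose proof (Rabs_triang (c - v) t).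
    replace (c + t - v) with ((c - v) + t) by ring; lra. }
  assert (HK : 0 <= K).
  { apply (C3_bounds_nonneg h h1 h2 h3 v rho); [|exact hC3].
    pose proof (Rabs_pos (c - v)); pose proof (Rabs_pos e); lra. }
  assert (Hd2 : forall t, Rabs t <= Rabs e -> Rabs (h2 (c + t) - h2 c) <= K * Rabs t ^ 1).
  { apply (vanishing_order_succ _ (fun t => h3 (c + t))); [exact HK | rewrite Rplus_0_r; ring | |].
    - intros t Ht; destruct (hC3 _ (Hball t Ht)) as (_ & _ & D2 & _).
      auto_derive; [eexists; exact D2 | rewrite (Derive_of_is_derive _ _ _ D2); ring].
    - intros t Ht; simpl; rewrite Rmult_1_r; apply hC3, Hball, Ht. }
  assert (Hd1 : forall t, Rabs t <= Rabs e ->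
                 Rabs (h1 (c + t) - h1 c - h2 c * t) <= K * Rabs t ^ 2).
  { apply (vanishing_order_succ _ (fun t => h2 (c + t) - h2 c));
      [exact HK | rewrite Rplus_0_r; ring | | exact Hd2].
    intros t Ht; destruct (hC3 _ (Hball t Ht)) as (_ & D1 & _).
    auto_derive; [eexists; exact D1 | rewrite (Derive_of_is_derive _ _ _ D1); ring]. }
  apply (vanishing_order_succ (fun t => h (c + t) - h c - h1 c * t - h2 c * t ^ 2 / 2)
           (fun t => h1 (c + t) - h1 c - h2 c * t) (Rabs e));
    [exact HK | rewrite Rplus_0_r; field | | exact Hd1 | lra].
  intros t Ht; destruct (hC3 _ (Hball t Ht)) as (D0 & _).
  auto_derive; [eexists; exact D0 | rewrite (Derive_of_is_derive _ _ _ D0); field].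
Qed.

Lemma odd_part_expansion c e : Rabs (c - v) + Rabs e < rho ->
  Rabs (odd_part h c e - h1 c * e) <= K * Rabs e ^ 3.
Proof.
  intros Hce.
  pose proof (taylor2_remainder c e Hce) as Rp.
  pose proof (taylor2_remainder c (- e) ltac:(rewrite Rabs_Ropp; exact Hce)) as Rm.
  rewrite Rabs_Ropp in Rm; replace (c + - e) with (c - e) in Rm by ring.
  replace (odd_part h c e - h1 c * e) with
    ((h (c + e) - h c - h1 c * e - h2 c * e ^ 2 / 2) / 2
     - (h (c - e) - h c - h1 c * - e - h2 c * (- e) ^ 2 / 2) / 2) by (unfold odd_part; field).
  unfold Rminus at 1; eapply Rle_trans; [apply Rabs_triang|].
  rewrite Rabs_Ropp; unfold Rdiv; rewrite !Rabs_mult, (Rabs_pos_eq (/ 2)) by lra; lra.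
Qed.

Lemma even_part_expansion c e : Rabs (c - v) + Rabs e < rho ->
  Rabs (even_part h c e - h2 c * e ^ 2 / 2) <= K * Rabs e ^ 3.
Proof.
  intros Hce.
  pose proof (taylor2_remainder c e Hce) as Rp.
  pose proof (taylor2_remainder c (- e) ltac:(rewrite Rabs_Ropp; exact Hce)) as Rm.
  rewrite Rabs_Ropp in Rm; replace (c + - e) with (c - e) in Rm by ring.
  replace (even_part h c e - h2 c * e ^ 2 / 2) with
    ((h (c + e) - h c - h1 c * e - h2 c * e ^ 2 / 2) / 2
     + (h (c - e) - h c - h1 c * - e - h2 c * (- e) ^ 2 / 2) / 2) by (unfold even_part; field).
  eapply Rle_trans; [apply Rabs_triang|].
  unfold Rdiv; rewrite !Rabs_mult, (Rabs_pos_eq (/ 2)) by lra; lra.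
Qed.

Lemma neuron_odd_error u w c e d : d <= 1 -> 2 * d < rho ->
  Rabs (w - u) <= d -> Rabs (c - v) <= d -> Rabs e <= d ->
  Rabs (w * odd_part h c e - u * h1 v * e) <= 2 * K * (1 + Rabs u) * d * Rabs e.
Proof.
  intros Hd1 Hdr Hw Hc He.
  assert (Hc' : Rabs (c - v) < rho) by (pose proof (Rabs_pos e); lra).
  destruct (hC3 c Hc') as (_ & _ & _ & B1 & _).
  assert (HK : 0 <= K) by (pose proof (Rabs_pos (h1 c)); lra).
  pose proof (Rabs_pos e) as He0; pose proof (Rabs_pos u) as Hu0.
  assert (He3 : K * Rabs e ^ 3 <= K * d * Rabs e).
  { replace (K * Rabs e ^ 3) with (K * Rabs e * (Rabs e * Rabs e)) by ring.
    replace (K * d * Rabs e) with (K * Rabs e * (d * 1)) by ring.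
    apply Rmult_le_compat_l; [nra | apply Rmult_le_compat; lra]. }
  set (r := odd_part h c e - h1 c * e).
  assert (Hr : Rabs r <= K * d * Rabs e) by (eapply Rle_trans; [apply odd_part_expansion; lra | exact He3]).
  assert (Hlip : Rabs (h1 c - h1 v) <= K * d).
  { eapply Rle_trans; [apply (lipschitz_at_center h1 h2 v rho K); [|exact Hc']|].
    - intros x Hx; split; apply hC3, Hx.
    - apply Rmult_le_compat_l; assumption. }
  assert (Hodd : Rabs (odd_part h c e) <= 2 * K * Rabs e).
  { replace (odd_part h c e) with (h1 c * e + r) by (unfold r; ring).
    eapply Rle_trans; [apply Rabs_triang|]; rewrite Rabs_mult.
    assert (Rabs (h1 c) * Rabs e <= K * Rabs e) by (apply Rmult_le_compat_r; assumption).
    assert (K * d * Rabs e <= K * Rabs e) by (rewrite <- (Rmult_1_r K) at 2; apply Rmult_le_compat_r; nra).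
    lra. }
  replace (w * odd_part h c e - u * h1 v * e)
    with ((w - u) * odd_part h c e + u * ((h1 c - h1 v) * e) + u * r) by (unfold r; ring).
  eapply Rle_trans; [apply Rabs_triang|]; eapply Rle_trans; [apply Rplus_le_compat_r, Rabs_triang|].
  rewrite !Rabs_mult.
  assert (Rabs (w - u) * Rabs (odd_part h c e) <= d * (2 * K * Rabs e))
    by (apply Rmult_le_compat; auto using Rabs_pos).
  assert (Rabs u * (Rabs (h1 c - h1 v) * Rabs e) <= Rabs u * (K * d * Rabs e))
    by (apply Rmult_le_compat_l; [lra | apply Rmult_le_compat_r; lra]).
  assert (Rabs u * Rabs r <= Rabs u * (K * d * Rabs e)) by (apply Rmult_le_compat_l; lra).
  nra.
Qed.

Lemma neuron_even_error u w c e d : d <= 1 -> 2 * d < rho ->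
  Rabs (w - u) <= d -> Rabs (c - v) <= d -> Rabs e <= d ->
  Rabs (w * even_part h c e - u * h2 v * e ^ 2 / 2) <= 2 * K * (1 + Rabs u) * d * e ^ 2.
Proof.
  intros Hd1 Hdr Hw Hc He.
  assert (Hc' : Rabs (c - v) < rho) by (pose proof (Rabs_pos e); lra).
  destruct (hC3 c Hc') as (_ & _ & _ & _ & B2 & _).
  assert (HK : 0 <= K) by (pose proof (Rabs_pos (h2 c)); lra).
  pose proof (Rabs_pos e) as He0; pose proof (Rabs_pos u) as Hu0.
  assert (He2 : 0 <= e ^ 2) by apply pow2_ge_0.
  assert (He3 : K * Rabs e ^ 3 <= K * d * e ^ 2).
  { rewrite <- (pow2_abs e).
    replace (K * Rabs e ^ 3) with (K * Rabs e ^ 2 * Rabs e) by ring.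
    replace (K * d * Rabs e ^ 2) with (K * Rabs e ^ 2 * d) by ring.
    apply Rmult_le_compat_l; [rewrite pow2_abs; nra | exact He]. }
  set (s := even_part h c e - h2 c * e ^ 2 / 2).
  assert (Hs : Rabs s <= K * d * e ^ 2) by (eapply Rle_trans; [apply even_part_expansion; lra | exact He3]).
  assert (Hlip : Rabs (h2 c - h2 v) <= K * d).
  { eapply Rle_trans; [apply (lipschitz_at_center h2 h3 v rho K); [|exact Hc']|].
    - intros x Hx; split; apply hC3, Hx.
    - apply Rmult_le_compat_l; assumption. }
  assert (Heven : Rabs (even_part h c e) <= 2 * K * e ^ 2).
  { replace (even_part h c e) with (h2 c * (e ^ 2 / 2) + s) by (unfold s; field).
    eapply Rle_trans; [apply Rabs_triang|]; rewrite Rabs_mult, (Rabs_pos_eq (e ^ 2 / 2)) by lra.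
    assert (Rabs (h2 c) * (e ^ 2 / 2) <= K * (e ^ 2 / 2)) by (apply Rmult_le_compat_r; lra).
    assert (K * d * e ^ 2 <= K * e ^ 2) by (rewrite <- (Rmult_1_r K) at 2; apply Rmult_le_compat_r; nra).
    assert (0 <= K * e ^ 2) by nra; lra. }
  replace (w * even_part h c e - u * h2 v * e ^ 2 / 2)
    with ((w - u) * even_part h c e + u * ((h2 c - h2 v) * (e ^ 2 / 2)) + u * s) by (unfold s; field).
  eapply Rle_trans; [apply Rabs_triang|]; eapply Rle_trans; [apply Rplus_le_compat_r, Rabs_triang|].
  rewrite !Rabs_mult, (Rabs_pos_eq (e ^ 2 / 2)) by lra.
  assert (Rabs (w - u) * Rabs (even_part h c e) <= d * (2 * K * e ^ 2))
    by (apply Rmult_le_compat; auto using Rabs_pos).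
  assert (Rabs u * (Rabs (h2 c - h2 v) * (e ^ 2 / 2)) <= Rabs u * (K * d * (e ^ 2 / 2)))
    by (apply Rmult_le_compat_l; [lra | apply Rmult_le_compat_r; lra]).
  assert (Rabs u * Rabs s <= Rabs u * (K * d * e ^ 2)) by (apply Rmult_le_compat_l; lra).
  assert (0 <= Rabs u * (K * d * e ^ 2)) by (apply Rmult_le_pos; [lra | apply Rmult_le_pos; nra]).
  lra.
Qed.

End Taylor.

(** * The risk near a collapsed parameter *)

Lemma posdef2_lower_bound a b c x y : 0 < a -> b ^ 2 < a * c ->
  (a * c - b ^ 2) / (a + c) * (x ^ 2 + y ^ 2) <= a * x ^ 2 + 2 * b * x * y + c * y ^ 2.
Proof.
  intros Ha Hdet.
  assert (Hc : 0 < c) by (pose proof (pow2_ge_0 b); nra).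
  apply (Rmult_le_reg_r (a + c)); [lra|].
  replace ((a * c - b ^ 2) / (a + c) * (x ^ 2 + y ^ 2) * (a + c))
    with ((a * c - b ^ 2) * (x ^ 2 + y ^ 2)) by (field; lra).
  (* (a x^2 + 2 b x y + c y^2)(a + c) - (a c - b^2)(x^2 + y^2) = (a x + b y)^2 + (b x + c y)^2 *)
  pose proof (pow2_ge_0 (a * x + b * y)); pose proof (pow2_ge_0 (b * x + c * y)); nra.
Qed.

Lemma perturbed_form_nonneg L Q D M kappa A eta N E :
  kappa * E <= L ^ 2 + Q -> Rabs L <= A * N ->
  Rabs (D - L) <= eta * N -> Rabs (M - Q) <= eta * E -> N ^ 2 <= 2 * E ->
  0 <= A -> 0 <= eta -> (4 * A + 1) * eta <= kappa -> 0 <= D ^ 2 + M.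
Proof.
  intros HQ HL HD HM HN HA Heta Hk.
  assert (HE : 0 <= E) by (pose proof (pow2_ge_0 N); lra).
  assert (Hcross : Rabs (L * (D - L)) <= 2 * A * eta * E).
  { rewrite Rabs_mult; pose proof (Rabs_pos L); pose proof (Rabs_pos (D - L)).
    apply Rle_trans with (A * N * (eta * N)); [apply Rmult_le_compat; assumption|].
    replace (A * N * (eta * N)) with (A * eta * N ^ 2) by ring.
    apply Rle_trans with (A * eta * (2 * E)); [apply Rmult_le_compat_l; nra | lra]. }
  replace (D ^ 2) with (L ^ 2 + 2 * (L * (D - L)) + (D - L) ^ 2) by ring.
  pose proof (Rabs_maj2 (L * (D - L))); pose proof (Rabs_maj2 (M - Q)).
  pose proof (pow2_ge_0 (D - L)); assert (kappa * E >= (4 * A + 1) * eta * E) by nra.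
  nra.
Qed.

(* On the inputs (1,0), (0,1) and (1/2,1/2), hidden unit i receives the
   pre-activations [center_i + spread_i], [center_i - spread_i] and [center_i]. *)
Definition center1 (q : params) : R := b1_1 q + (W1_11 q + W1_12 q) / 2.
Definition spread1 (q : params) : R := (W1_11 q - W1_12 q) / 2.
Definition center2 (q : params) : R := b1_2 q + (W1_21 q + W1_22 q) / 2.
Definition spread2 (q : params) : R := (W1_21 q - W1_22 q) / 2.

Lemma half_sq_sum_ge x y z :
  1 / 3 + ((x - y) / 2) ^ 2 + 2 / 3 * ((x + y) / 2 - z)
  <= / 2 * ((x - 0) ^ 2 + (y - 0) ^ 2 + (z - 1) ^ 2).
Proof.
  (* the gap is M^2/3 + (3 z - 1 + 2 M)^2/6 with M = (x + y)/2 - z *)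
  pose proof (pow2_ge_0 ((x + y) / 2 - z)); pose proof (pow2_ge_0 (3 * z - 1 + 2 * ((x + y) / 2 - z))).
  nra.
Qed.

Definition odd_response (h : R -> R) (q : params) : R :=
  W2_1 q * odd_part h (center1 q) (spread1 q) + W2_2 q * odd_part h (center2 q) (spread2 q).
Definition even_response (h : R -> R) (q : params) : R :=
  W2_1 q * even_part h (center1 q) (spread1 q) + W2_2 q * even_part h (center2 q) (spread2 q).

Lemma hidden_preactivations a a' b :
  a * 1 + a' * 0 + b = (b + (a + a') / 2) + (a - a') / 2 /\
  a * 0 + a' * 1 + b = (b + (a + a') / 2) - (a - a') / 2 /\
  a * (1 / 2) + a' * (1 / 2) + b = b + (a + a') / 2.
Proof. repeat split; field. Qed.

Lemma risk_lower_bound h q : 1 / 3 + odd_response h q ^ 2 + 2 / 3 * even_response h q <= risk h q.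
Proof.
  unfold risk, net.
  destruct (hidden_preactivations (W1_11 q) (W1_12 q) (b1_1 q)) as (-> & -> & ->).
  destruct (hidden_preactivations (W1_21 q) (W1_22 q) (b1_2 q)) as (-> & -> & ->).
  eapply Rle_trans; [|apply half_sq_sum_ge].
  unfold odd_response, even_response, odd_part, even_part, center1, spread1, center2, spread2.
  right; field.
Qed.

Definition collapsed_params (v1 v2 u1 u2 : R) : params := Params 0 0 0 0 v1 v2 u1 u2 0.

Lemma risk_collapsed h v1 v2 u1 u2 : u1 * h v1 + u2 * h v2 = 1 / 3 ->
  risk h (collapsed_params v1 v2 u1 u2) = 1 / 3.
Proof.
  intros Hsum; unfold risk, net, collapsed_params; simpl.
  replace (0 * 1 + 0 * 0 + v1) with v1 by ring. replace (0 * 0 + 0 * 1 + v1) with v1 by ring.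
  replace (0 * 1 + 0 * 0 + v2) with v2 by ring. replace (0 * 0 + 0 * 1 + v2) with v2 by ring.
  replace (0 * (1 / 2) + 0 * (1 / 2) + v1) with v1 by field.
  replace (0 * (1 / 2) + 0 * (1 / 2) + v2) with v2 by field.
  rewrite Rplus_0_r, Hsum; field.
Qed.

Definition near_collapsed (d v1 v2 u1 u2 : R) (q : params) : Prop :=
  Rabs (W2_1 q - u1) <= d /\ Rabs (center1 q - v1) <= d /\ Rabs (spread1 q) <= d /\
  Rabs (W2_2 q - u2) <= d /\ Rabs (center2 q - v2) <= d /\ Rabs (spread2 q) <= d.

Lemma near_collapsed_of_close eps v1 v2 u1 u2 q :
  params_close eps (collapsed_params v1 v2 u1 u2) q -> near_collapsed (2 * eps) v1 v2 u1 u2 q.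
Proof.
  unfold params_close, near_collapsed, collapsed_params, center1, spread1, center2, spread2; simpl.
  rewrite !Rminus_0_r.
  intros (H11 & H12 & H21 & H22 & Hb1 & Hb2 & Hw1 & Hw2 & _).
  apply Rabs_def2 in H11, H12, H21, H22, Hb1, Hb2, Hw1, Hw2.
  repeat split; apply Rabs_le; lra.
Qed.

Lemma two_neuron_error (E1 E2 e1 e2 b1 b2 C d : R) :
  Rabs E1 <= b1 * d * e1 -> Rabs E2 <= b2 * d * e2 -> b1 <= C -> b2 <= C ->
  0 <= d -> 0 <= e1 -> 0 <= e2 -> Rabs (E1 + E2) <= C * d * (e1 + e2).
Proof.
  intros H1 H2 Hb1 Hb2 Hd He1 He2.
  eapply Rle_trans; [apply Rabs_triang|].
  assert (b1 * d * e1 <= C * d * e1) by (apply Rmult_le_compat_r; [|apply Rmult_le_compat_r]; lra).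
  assert (b2 * d * e2 <= C * d * e2) by (apply Rmult_le_compat_r; [|apply Rmult_le_compat_r]; lra).
  lra.
Qed.

Lemma exists_small_radius rho kappa A C : 0 < rho -> 0 < kappa -> 0 <= A -> 0 <= C ->
  exists d, 0 < d /\ d <= 1 /\ 2 * d < rho /\ (4 * A + 1) * (C * d) <= kappa.
Proof.
  intros Hrho Hk HA HC.
  set (T := (4 * A + 1) * (C + 1)).
  assert (HT : 0 < T) by (unfold T; nra).
  assert (0 < kappa / T) by (apply Rdiv_lt_0_compat; assumption).
  pose proof (Rmin_l (Rmin 1 (rho / 4)) (kappa / T)); pose proof (Rmin_r (Rmin 1 (rho / 4)) (kappa / T)).
  pose proof (Rmin_l 1 (rho / 4)); pose proof (Rmin_r 1 (rho / 4)).
  assert (Hd0 : 0 < Rmin (Rmin 1 (rho / 4)) (kappa / T)) by (repeat apply Rmin_pos; lra).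
  set (d := Rmin (Rmin 1 (rho / 4)) (kappa / T)) in *.
  assert (Hd : d * T <= kappa).
  { apply Rle_trans with (kappa / T * T); [apply Rmult_le_compat_r; lra|].
    right; field; lra. }
  exists d; repeat split; try lra.
  unfold T in Hd; nra.
Qed.

Section CollapsedMinimum.

Variables (h h1 h2 h3 : R -> R) (v1 v2 rho K u1 u2 : R).
Hypotheses (hC1 : C3_bounds h h1 h2 h3 v1 rho K) (hC2 : C3_bounds h h1 h2 h3 v2 rho K).

Lemma odd_response_error d q : d <= 1 -> 2 * d < rho -> near_collapsed d v1 v2 u1 u2 q ->
  Rabs (odd_response h q - (u1 * h1 v1 * spread1 q + u2 * h1 v2 * spread2 q))
  <= 2 * K * (1 + Rabs u1 + Rabs u2) * d * (Rabs (spread1 q) + Rabs (spread2 q)).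
Proof.
  intros Hd1 Hdr (Hw1 & Hc1 & He1 & Hw2 & Hc2 & He2).
  assert (HK : 0 <= K)
    by (apply (C3_bounds_nonneg h h1 h2 h3 v1 rho); [pose proof (Rabs_pos (spread1 q)); lra | exact hC1]).
  pose proof (Rabs_pos u1); pose proof (Rabs_pos u2).
  replace (odd_response h q - _)
    with ((W2_1 q * odd_part h (center1 q) (spread1 q) - u1 * h1 v1 * spread1 q)
          + (W2_2 q * odd_part h (center2 q) (spread2 q) - u2 * h1 v2 * spread2 q))
    by (unfold odd_response; ring).
  apply (two_neuron_error _ _ _ _ (2 * K * (1 + Rabs u1)) (2 * K * (1 + Rabs u2)));
    [ apply (neuron_odd_error h h1 h2 h3 v1 rho K hC1); assumption
    | apply (neuron_odd_error h h1 h2 h3 v2 rho K hC2); assumption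
    | nra | nra | pose proof (Rabs_pos (spread1 q)); lra | apply Rabs_pos | apply Rabs_pos ].
Qed.

Lemma even_response_error d q : d <= 1 -> 2 * d < rho -> near_collapsed d v1 v2 u1 u2 q ->
  Rabs (2 / 3 * even_response h q - (u1 * h2 v1 * spread1 q ^ 2 + u2 * h2 v2 * spread2 q ^ 2) / 3)
  <= 2 * K * (1 + Rabs u1 + Rabs u2) * d * (spread1 q ^ 2 + spread2 q ^ 2).
Proof.
  intros Hd1 Hdr (Hw1 & Hc1 & He1 & Hw2 & Hc2 & He2).
  assert (HK : 0 <= K)
    by (apply (C3_bounds_nonneg h h1 h2 h3 v1 rho); [pose proof (Rabs_pos (spread1 q)); lra | exact hC1]).
  pose proof (Rabs_pos u1); pose proof (Rabs_pos u2).
  pose proof (pow2_ge_0 (spread1 q)); pose proof (pow2_ge_0 (spread2 q)).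
  replace (2 / 3 * even_response h q - _)
    with (2 / 3 * ((W2_1 q * even_part h (center1 q) (spread1 q) - u1 * h2 v1 * spread1 q ^ 2 / 2)
                   + (W2_2 q * even_part h (center2 q) (spread2 q) - u2 * h2 v2 * spread2 q ^ 2 / 2)))
    by (unfold even_response; field).
  rewrite Rabs_mult, (Rabs_pos_eq (2 / 3)) by lra.
  assert (Hsum : Rabs ((W2_1 q * even_part h (center1 q) (spread1 q) - u1 * h2 v1 * spread1 q ^ 2 / 2)
                      + (W2_2 q * even_part h (center2 q) (spread2 q) - u2 * h2 v2 * spread2 q ^ 2 / 2))
                 <= 2 * K * (1 + Rabs u1 + Rabs u2) * d * (spread1 q ^ 2 + spread2 q ^ 2)).
  { apply (two_neuron_error _ _ _ _ (2 * K * (1 + Rabs u1)) (2 * K * (1 + Rabs u2)));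
      [ apply (neuron_even_error h h1 h2 h3 v1 rho K hC1); assumption
      | apply (neuron_even_error h h1 h2 h3 v2 rho K hC2); assumption
      | nra | nra | pose proof (Rabs_pos (spread1 q)); lra | lra | lra ]. }
  assert (0 <= 2 * K * (1 + Rabs u1 + Rabs u2) * d * (spread1 q ^ 2 + spread2 q ^ 2)).
  { apply Rmult_le_pos; [|lra]; apply Rmult_le_pos; [nra|]; pose proof (Rabs_pos (spread1 q)); lra. }
  lra.
Qed.

Hypotheses (Ha : (u1 * h1 v1) ^ 2 + u1 * h2 v1 / 3 > 0)
  (Hdet : (u1 * h1 v1 * (u2 * h1 v2)) ^ 2 <
          ((u1 * h1 v1) ^ 2 + u1 * h2 v1 / 3) * ((u2 * h1 v2) ^ 2 + u2 * h2 v2 / 3)).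

Lemma collapsed_second_order : 0 < rho -> exists d, 0 < d /\
  forall q, near_collapsed d v1 v2 u1 u2 q -> 0 <= odd_response h q ^ 2 + 2 / 3 * even_response h q.
Proof.
  intros Hrho.
  set (a := (u1 * h1 v1) ^ 2 + u1 * h2 v1 / 3) in *.
  set (b := u1 * h1 v1 * (u2 * h1 v2)) in *.
  set (c := (u2 * h1 v2) ^ 2 + u2 * h2 v2 / 3) in *.
  assert (Hc : 0 < c) by (pose proof (pow2_ge_0 b); nra).
  set (kappa := (a * c - b ^ 2) / (a + c)).
  set (A := Rabs (u1 * h1 v1) + Rabs (u2 * h1 v2)).
  set (C := 2 * K * (1 + Rabs u1 + Rabs u2)).
  pose proof (Rabs_pos u1); pose proof (Rabs_pos u2).
  pose proof (Rabs_pos (u1 * h1 v1)); pose proof (Rabs_pos (u2 * h1 v2)).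
  pose proof (C3_bounds_nonneg h h1 h2 h3 v1 rho K Hrho hC1).
  assert (HA : 0 <= A) by (unfold A; lra).
  assert (HC : 0 <= C) by (unfold C; nra).
  destruct (exists_small_radius rho kappa A C) as (d & Hd0 & Hd1 & Hdr & Hdk);
    [exact Hrho | apply Rdiv_lt_0_compat; lra | exact HA | exact HC |].
  exists d; split; [exact Hd0|]; intros q Hq.
  set (e1 := spread1 q); set (e2 := spread2 q).
  apply (perturbed_form_nonneg (u1 * h1 v1 * e1 + u2 * h1 v2 * e2)
           ((u1 * h2 v1 * e1 ^ 2 + u2 * h2 v2 * e2 ^ 2) / 3) _ _ kappa A (C * d)
           (Rabs e1 + Rabs e2) (e1 ^ 2 + e2 ^ 2)); try assumption.
  - replace (_ ^ 2 + _ / 3) with (a * e1 ^ 2 + 2 * b * e1 * e2 + c * e2 ^ 2) by (unfold a, b, c; field).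
    apply posdef2_lower_bound; assumption.
  - eapply Rle_trans; [apply Rabs_triang|].
    rewrite (Rabs_mult (u1 * h1 v1) e1), (Rabs_mult (u2 * h1 v2) e2).
    pose proof (Rabs_pos e1); pose proof (Rabs_pos e2).
    pose proof (Rabs_pos (u1 * h1 v1)); pose proof (Rabs_pos (u2 * h1 v2)); unfold A; nra.
  - exact (odd_response_error d q Hd1 Hdr Hq).
  - exact (even_response_error d q Hd1 Hdr Hq).
  - rewrite <- (pow2_abs e1), <- (pow2_abs e2); pose proof (pow2_ge_0 (Rabs e1 - Rabs e2)); nra.
  - nra.
Qed.

Theorem collapsed_local_min : 0 < rho -> u1 * h v1 + u2 * h v2 = 1 / 3 ->
  is_local_min (risk h) (collapsed_params v1 v2 u1 u2).
Proof.
  intros Hrho Hsum.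
  destruct (collapsed_second_order Hrho) as (d & Hd & Hnonneg).
  exists (d / 2); split; [lra|]; intros q Hq.
  rewrite risk_collapsed by exact Hsum.
  apply near_collapsed_of_close in Hq; replace (2 * (d / 2)) with d in Hq by field.
  pose proof (risk_lower_bound h q); pose proof (Hnonneg q Hq); lra.
Qed.

End CollapsedMinimum.

(** * The global and the spurious local minimum *)

Definition exact_fit_witness (h : R -> R) (v1 v2 v3 v4 : R) : Prop :=
  h v1 * h v4 = h v2 * h v3 /\
  h v1 * h ((v3 + v4) / 2) <> h v3 * h ((v1 + v2) / 2).

Lemma risk_nonneg h q : 0 <= risk h q.
Proof.
  unfold risk; pose proof (pow2_ge_0 (net h q 1 0 - 0)); pose proof (pow2_ge_0 (net h q 0 1 - 0)).
  pose proof (pow2_ge_0 (net h q (1 / 2) (1 / 2) - 1)); lra.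
Qed.

Lemma global_min_of_exact_fit h v1 v2 v3 v4 : exact_fit_witness h v1 v2 v3 v4 ->
  exists p, is_global_min (risk h) p /\ risk h p = 0.
Proof.
  intros [E1 E2].
  set (k := / (h v3 * h ((v1 + v2) / 2) - h v1 * h ((v3 + v4) / 2))).
  assert (Hk : k * (h v3 * h ((v1 + v2) / 2) - h v1 * h ((v3 + v4) / 2)) = 1)
    by (unfold k; field; intro H; apply E2; lra).
  (* the output weights (k h v3, - k h v1) cancel on the inputs (1,0) and (0,1) *)
  set (p := Params v1 v2 v3 v4 0 0 (k * h v3) (- (k * h v1)) 0).
  assert (R0 : risk h p = 0).
  { unfold risk, net, p; simpl.
    replace (v1 * 1 + v2 * 0 + 0) with v1 by ring. replace (v3 * 1 + v4 * 0 + 0) with v3 by ring.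
    replace (v1 * 0 + v2 * 1 + 0) with v2 by ring. replace (v3 * 0 + v4 * 1 + 0) with v4 by ring.
    replace (v1 * (1 / 2) + v2 * (1 / 2) + 0) with ((v1 + v2) / 2) by field.
    replace (v3 * (1 / 2) + v4 * (1 / 2) + 0) with ((v3 + v4) / 2) by field.
    replace (k * h v3 * h v2 + - (k * h v1) * h v4) with (k * (h v2 * h v3 - h v1 * h v4)) by ring.
    rewrite E1; nra. }
  exists p; split; [intros q; rewrite R0; apply risk_nonneg | exact R0].
Qed.

(* Condition (ii) only asks for smoothness at v; the local minimality argument also
   needs the derivatives [f n] of h on a whole neighbourhood of v. *)
Definition spurious_min_data (h : R -> R) (f : nat -> R -> R) (v u1 u2 : R) : Prop :=
  (exists rho, 0 < rho /\ derivative_family h f v rho) /\ cauchy_bounded f v /\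
  (u1 + u2) * h v = 1 / 3 /\
  (u1 * f 1%nat v) ^ 2 + u1 * f 2%nat v / 3 > 0 /\
  (u1 * f 1%nat v * (u2 * f 1%nat v)) ^ 2 <
    ((u1 * f 1%nat v) ^ 2 + u1 * f 2%nat v / 3) * ((u2 * f 1%nat v) ^ 2 + u2 * f 2%nat v / 3).

Lemma condition_ii_of_data h f v u1 u2 : spurious_min_data h f v u1 u2 ->
  exists v1 v2 u1 u2 : R,
     u1 * h v1 + u2 * h v2 = 1 / 3 /\
     smooth_at h v1 /\ smooth_at h v2 /\
     (exists c : R, 0 < c /\
        forall n : nat, (1 <= n)%nat ->
          Rabs (Derive_n h n v1) <= c ^ n * INR (Factorial.fact n) /\
          Rabs (Derive_n h n v2) <= c ^ n * INR (Factorial.fact n)) /\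
     (u1 * Derive_n h 1 v1) ^ 2 + u1 * Derive_n h 2 v1 / 3 > 0 /\
     (u1 * Derive_n h 1 v1 * (u2 * Derive_n h 1 v2)) ^ 2 <
       ((u1 * Derive_n h 1 v1) ^ 2 + u1 * Derive_n h 2 v1 / 3) *
       ((u2 * Derive_n h 1 v2) ^ 2 + u2 * Derive_n h 2 v2 / 3).
Proof.
  intros ((rho & Hrho & Hfam) & (c & Hc & Hbound) & Hsum & Ha & Hdet).
  assert (Hv : Rabs (v - v) < rho) by (rewrite Rminus_eq_0, Rabs_R0; exact Hrho).
  pose proof (fun n => Derive_n_family h f v rho Hfam n v Hv) as Hn.
  assert (HD : forall n, Derive_n h n v = f n v) by (intros n; apply Hn).
  assert (Hsmooth : smooth_at h v) by (intros n; apply Hn).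
  exists v, v, u1, u2; rewrite !HD.
  repeat split; try assumption; [lra | exists c; split; [exact Hc|]];
    intros n Hn1; rewrite HD; split; apply Hbound, Hn1.
Qed.

Lemma local_min_of_data h f v u1 u2 : spurious_min_data h f v u1 u2 ->
  exists p, is_local_min (risk h) p /\ risk h p = 1 / 3.
Proof.
  intros ((rho & Hrho & Hfam) & _ & Hsum & Ha & Hdet).
  destruct (C3_bounds_of_family h f v rho Hrho Hfam) as (r & K & Hr & HC3).
  assert (Hsum' : u1 * h v + u2 * h v = 1 / 3) by lra.
  exists (collapsed_params v v u1 u2); split; [|apply risk_collapsed, Hsum'].
  apply (collapsed_local_min h (f 1%nat) (f 2%nat) (f 3%nat) v v r K u1 u2); assumption.
Qed.

Lemma same_center_gap d1 d2 u1 u2 :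
  u1 * u2 * d2 * (d1 ^ 2 * (u1 + u2) + d2 / 3) > 0 ->
  (u1 * d1 * (u2 * d1)) ^ 2 < ((u1 * d1) ^ 2 + u1 * d2 / 3) * ((u2 * d1) ^ 2 + u2 * d2 / 3).
Proof.
  intros H.
  assert (E : ((u1 * d1) ^ 2 + u1 * d2 / 3) * ((u2 * d1) ^ 2 + u2 * d2 / 3) - (u1 * d1 * (u2 * d1)) ^ 2
              = u1 * u2 * d2 * (d1 ^ 2 * (u1 + u2) + d2 / 3) / 3) by field.
  lra.
Qed.

(** * The activations *)

Lemma mid_ln a b m : 0 < a -> 0 < b -> 0 < m -> a * b = m * m -> (ln a + ln b) / 2 = ln m.
Proof.
  intros Ha Hb Hm E; rewrite <- ln_mult by assumption; rewrite E, ln_mult by assumption; field.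
Qed.

Lemma sigmoid_ln t : 0 < t -> sigmoid (ln t) = t / (1 + t).
Proof. intros Ht; unfold sigmoid; rewrite exp_Ropp, exp_ln by exact Ht; field; lra. Qed.

Lemma sigmoid_ode x : is_derive sigmoid x (peval (0 :: 1 :: -1 :: nil) (sigmoid x)).
Proof.
  unfold sigmoid; pose proof (exp_pos (- x)).
  auto_derive; simpl; [lra | field; lra].
Qed.

Lemma sigmoid_exact_fit : exists v1 v2 v3 v4, exact_fit_witness sigmoid v1 v2 v3 v4.
Proof.
  exists (ln 1), (ln (1 / 4)), (ln 9), (ln (9 / 16)); unfold exact_fit_witness.
  rewrite (mid_ln 9 (9 / 16) (9 / 4)), (mid_ln 1 (1 / 4) (1 / 2)), !sigmoid_ln by lra.
  split; [field | intro H; field_simplify in H; lra].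
Qed.

Lemma sigmoid_spurious_min :
  exists f v u1 u2, spurious_min_data sigmoid f v u1 u2.
Proof.
  set (D := 0 :: 1 :: -1 :: nil); set (v := - ln 2).
  assert (Hv : sigmoid v = 1 / 3) by (unfold v, sigmoid; rewrite Ropp_involutive, exp_ln by lra; field).
  exists (ode_family sigmoid D), v, (1 / 2), (1 / 2).
  assert (E1 : ode_family sigmoid D 1 v = 2 / 9) by (unfold ode_family; simpl; rewrite Hv; field).
  assert (E2 : ode_family sigmoid D 2 v = 2 / 27) by (unfold ode_family; simpl; rewrite Hv; field).
  split; [exists 1; split; [lra | apply ode_family_derivative_family, sigmoid_ode]|].
  split; [apply ode_family_cauchy; rewrite Hv, Rabs_pos_eq; lra|].
  rewrite E1, E2, Hv; repeat split; lra.
Qed.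

Lemma tanh_ln t : 0 < t -> tanhR (ln t) = (t ^ 2 - 1) / (t ^ 2 + 1).
Proof.
  intros Ht; unfold tanhR; rewrite exp_Ropp, exp_ln by exact Ht.
  assert (0 < t ^ 2 + 1) by (pose proof (pow2_ge_0 t); lra).
  field; split; [lra|]; intro H0.
  assert (t * (t + / t) = t ^ 2 + 1) by (field; lra); nra.
Qed.

Lemma tanh_ode x : is_derive tanhR x (peval (1 :: 0 :: -1 :: nil) (tanhR x)).
Proof.
  unfold tanhR; pose proof (exp_pos x); pose proof (exp_pos (- x)).
  auto_derive; simpl; [lra | field; lra].
Qed.

Lemma tanh_exact_fit : exists v1 v2 v3 v4, exact_fit_witness tanhR v1 v2 v3 v4.
Proof.
  exists (ln 4), (ln 1), (ln 9), (ln 1); unfold exact_fit_witness.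
  rewrite (mid_ln 9 1 3), (mid_ln 4 1 2), !tanh_ln by lra.
  split; [field | intro H; field_simplify in H; lra].
Qed.

Lemma tanh_spurious_min : exists f v u1 u2, spurious_min_data tanhR f v u1 u2.
Proof.
  set (D := 1 :: 0 :: -1 :: nil); set (v := ln (6 / 5)).
  assert (Hv : tanhR v = 11 / 61) by (unfold v; rewrite tanh_ln by lra; field).
  exists (ode_family tanhR D), v, (-1), (94 / 33).
  assert (E1 : ode_family tanhR D 1 v = 3600 / 3721) by (unfold ode_family; simpl; rewrite Hv; field).
  assert (E2 : ode_family tanhR D 2 v = - 2 * (11 / 61) * (3600 / 3721))
    by (unfold ode_family; simpl; rewrite Hv; field).
  split; [exists 1; split; [lra | apply ode_family_derivative_family, tanh_ode]|].
  split; [apply ode_family_cauchy; rewrite Hv, Rabs_pos_eq; lra|].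
  rewrite E1, E2, Hv; repeat split; lra.
Qed.

Lemma atan_exact_fit : exists v1 v2 v3 v4, exact_fit_witness atan v1 v2 v3 v4.
Proof.
  set (s := sqrt 3).
  assert (Hs2 : s * s = 3) by (apply sqrt_sqrt; lra).
  assert (Hs : 0 < s) by (apply sqrt_lt_R0; lra).
  pose proof PI_RGT_0.
  assert (A3 : atan s = PI / 3) by (unfold s; rewrite <- tan_PI3; apply atan_tan; lra).
  assert (A6 : atan (1 / s) = PI / 6) by (unfold s; rewrite <- tan_PI6; apply atan_tan; lra).
  exists (2 / s), 0, (2 * s), 0; unfold exact_fit_witness; rewrite atan_0; split; [ring|].
  replace ((2 * s + 0) / 2) with s by field; replace ((2 / s + 0) / 2) with (1 / s) by (field; lra).
  rewrite A3, A6.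
  (* atan (2 / s) > atan 1 = PI / 4 while atan (2 s) < PI / 2 *)
  assert (H1 : PI / 4 < atan (2 / s)).
  { rewrite <- atan_1; apply atan_increasing.
    apply (Rmult_lt_reg_r s); [lra|]; replace (2 / s * s) with 2 by (field; lra); nra. }
  pose proof (atan_bound (2 * s)).
  intro Heq; nra.
Qed.

Lemma atan_spurious_min : exists f v u1 u2, spurious_min_data atan f v u1 u2.
Proof.
  set (s := sqrt 3).
  assert (Hs2 : s * s = 3) by (apply sqrt_sqrt; lra).
  assert (Hs : 0 < s) by (apply sqrt_lt_R0; lra).
  pose proof PI_RGT_0; pose proof PI_4.
  set (v := 1 / s).
  assert (A6 : atan v = PI / 6) by (unfold v, s; rewrite <- tan_PI6; apply atan_tan; lra).
  assert (Hv2 : v ^ 2 = 1 / 3).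
  { unfold v; replace ((1 / s) ^ 2) with (1 / (s * s)) by (field; lra); rewrite Hs2; reflexivity. }
  assert (Hv0 : 0 < v) by (unfold v; apply Rdiv_lt_0_compat; lra).
  assert (E1 : atan_family 1 v = 3 / 4).
  { simpl; replace (1 + v * (v * 1)) with (4 / 3) by (simpl in Hv2; lra); field. }
  assert (E2 : atan_family 2 v = - 2 * v * (9 / 16)).
  { cbn [atan_family atan_poly]; rewrite !peval_padd, peval_pscal; cbn [peval pder padd pow].
    replace (1 + v * (v * 1)) with (4 / 3) by (simpl in Hv2; lra); simpl INR; field. }
  exists atan_family, v, (-1), (2 / PI + 1).
  split; [exists 1; split; [lra | apply atan_family_derivative_family]|].
  split; [apply atan_family_cauchy; rewrite Rabs_pos_eq; nra|].
  assert (HPI : 1 / 2 <= 2 / PI).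
  { apply (Rmult_le_reg_r PI); [lra|]; replace (2 / PI * PI) with 2 by (field; lra); lra. }
  assert (Hv34 : v < 3 / 4) by nra.
  rewrite E1, E2, A6; split; [field; lra|]; split; [nra|].
  apply same_center_gap.
  replace ((3 / 4) ^ 2 * (-1 + (2 / PI + 1)) + -2 * v * (9 / 16) / 3)
    with (9 / 16 * (2 / PI - 2 * v / 3)) by (field; lra).
  replace (-1 * (2 / PI + 1) * (-2 * v * (9 / 16)) * (9 / 16 * (2 / PI - 2 * v / 3)))
    with (9 / 8 * ((2 / PI + 1) * v) * (9 / 16 * (2 / PI - 2 * v / 3))) by (field; lra).
  apply Rmult_lt_0_compat; [|lra]; apply Rmult_lt_0_compat; [lra|]; apply Rmult_lt_0_compat; lra.
Qed.

Definition quad_family (n : nat) (x : R) : R :=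
  match n with O => x ^ 2 | 1%nat => 2 * x | 2%nat => 2 | _ => 0 end.

Lemma quad_exact_fit : exists v1 v2 v3 v4, exact_fit_witness quadR v1 v2 v3 v4.
Proof.
  exists 1, 1, 1, (-1); unfold exact_fit_witness, quadR.
  replace ((1 + -1) / 2) with 0 by field; replace ((1 + 1) / 2) with 1 by field.
  split; [ring | lra].
Qed.

Lemma quad_spurious_min : exists f v u1 u2, spurious_min_data quadR f v u1 u2.
Proof.
  exists quad_family, 1, (1 / 6), (1 / 6).
  split; [exists 1; split; [lra|]; split; [intros x _; reflexivity|]|].
  - intros [|[|[|n]]] x _.
    + change (is_derive (fun t => t ^ 2) x (2 * x)); auto_derive; [exact I | ring].
    + change (is_derive (fun t => 2 * t) x 2); auto_derive; [exact I | ring].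
    + exact (is_derive_const 2 x).
    + exact (is_derive_const 0 x).
  - split; [exists 2; split; [lra|]; intros [|[|[|n]]] Hn; [lia | | |]|].
    + simpl; rewrite Rabs_pos_eq; lra.
    + simpl; rewrite Rabs_pos_eq; lra.
    + simpl quad_family; rewrite Rabs_R0; apply Rmult_le_pos; [apply pow_le; lra | apply pos_INR].
    + unfold quadR; simpl; repeat split; lra.
Qed.

Lemma elu_neg l a x : x < 0 -> elu l a x = l * a * (exp x - 1).
Proof. intros H; unfold elu; destruct (Rle_dec 0 x); [lra | reflexivity]. Qed.

Lemma elu_nonneg l a x : 0 <= x -> elu l a x = l * x.
Proof. intros H; unfold elu; destruct (Rle_dec 0 x); [reflexivity | lra]. Qed.

Definition exp_family (L : R) (n : nat) (x : R) : R :=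
  match n with O => L * (exp x - 1) | S _ => L * exp x end.

Lemma elu_exact_fit lambda alpha : 0 < lambda -> 0 < alpha ->
  exists v1 v2 v3 v4, exact_fit_witness (elu lambda alpha) v1 v2 v3 v4.
Proof.
  intros Hl Ha; exists 1, 0, (-2), 0; unfold exact_fit_witness.
  replace ((-2 + 0) / 2) with (-1) by field; replace ((1 + 0) / 2) with (1 / 2) by field.
  rewrite (elu_nonneg _ _ 1), (elu_nonneg _ _ 0), (elu_nonneg _ _ (1 / 2)), (elu_neg _ _ (-1)),
    (elu_neg _ _ (-2)) by lra.
  split; [ring|].
  (* with E = exp (-1), the two sides differ by a multiple of (E - 1)^2 *)
  replace (-2) with (-1 + -1) by ring; rewrite exp_plus.
  set (E := exp (-1)).
  assert (HE : E < 1) by (unfold E; rewrite <- exp_0; apply exp_increasing; lra).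
  assert (Hp : 0 < lambda * (lambda * alpha)) by (apply Rmult_lt_0_compat; nra).
  intro Heq.
  assert (Hz : lambda * (lambda * alpha) * (E - 1) ^ 2 = 0) by nra.
  apply Rmult_integral in Hz as [Hz | Hz]; [lra | nra].
Qed.

Lemma elu_spurious_min lambda alpha : 0 < lambda -> 0 < alpha ->
  exists f v u1 u2, spurious_min_data (elu lambda alpha) f v u1 u2.
Proof.
  intros Hl Ha; set (L := lambda * alpha).
  assert (HL : 0 < L) by (unfold L; nra).
  set (v := ln (3 / 4)).
  assert (Hv : v < 0) by (unfold v; rewrite <- ln_1; apply ln_increasing; lra).
  assert (Hev : exp v = 3 / 4) by (unfold v; apply exp_ln; lra).
  exists (exp_family L), v, 1, (- 4 / (3 * L) - 1).
  split; [exists (- v / 2); split; [lra|]; split|].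
  - intros x Hx; apply Rabs_def2 in Hx; rewrite elu_neg by lra; reflexivity.
  - intros [|n] x _.
    + change (is_derive (fun t => L * (exp t - 1)) x (L * exp x)); auto_derive; [exact I | ring].
    + change (is_derive (fun t => L * exp t) x (L * exp x)); auto_derive; [exact I | ring].
  - split.
    + exists (L + 1); split; [lra|]; intros [|n] Hn; [lia|]; simpl exp_family.
      rewrite Hev, Rabs_pos_eq by lra.
      pose proof (Rle_pow (L + 1) 1 (S n) ltac:(lra) Hn); rewrite pow_1 in *.
      assert (1 <= INR (Factorial.fact (S n))) by (apply (le_INR 1); apply Factorial.lt_O_fact).
      assert (0 <= (L + 1) ^ S n) by (apply pow_le; lra).
      nra.
    + simpl exp_family; rewrite elu_neg, Hev by lra; fold L.
      assert (Hu2 : - 4 / (3 * L) < 0) by (apply Rdiv_neg_pos; nra).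
      split; [field; lra|]; split; [nra|].
      apply same_center_gap.
      replace ((L * (3 / 4)) ^ 2 * (1 + (- 4 / (3 * L) - 1)) + L * (3 / 4) / 3) with (- L / 2)
        by (field; lra).
      nra.
Qed.

Lemma admissible_activation_witnesses h : admissible_activation h ->
  (exists v1 v2 v3 v4, exact_fit_witness h v1 v2 v3 v4) /\
  (exists f v u1 u2, spurious_min_data h f v u1 u2).
Proof.
  intros [->|[->|[->|[->|(lambda & alpha & Halpha & Hlambda & ->)]]]].
  - exact (conj sigmoid_exact_fit sigmoid_spurious_min).
  - exact (conj tanh_exact_fit tanh_spurious_min).
  - exact (conj atan_exact_fit atan_spurious_min).
  - exact (conj quad_exact_fit quad_spurious_min).
  - assert (Hl : 0 < lambda) by lra.
    exact (conj (elu_exact_fit lambda alpha Hl Halpha) (elu_spurious_min lambda alpha Hl Halpha)).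
Qed.

Theorem corollary1 (h : R -> R) (Hh : admissible_activation h) :
  (* (i) *)
  (exists v1 v2 v3 v4 : R,
     h v1 * h v4 = h v2 * h v3 /\
     h v1 * h ((v3 + v4) / 2) <> h v3 * h ((v1 + v2) / 2)) /\
  (* (ii) *)
  (exists v1 v2 u1 u2 : R,
     u1 * h v1 + u2 * h v2 = 1 / 3 /\
     smooth_at h v1 /\ smooth_at h v2 /\
     (exists c : R, 0 < c /\
        forall n : nat, (1 <= n)%nat ->
          Rabs (Derive_n h n v1) <= c ^ n * INR (Factorial.fact n) /\
          Rabs (Derive_n h n v2) <= c ^ n * INR (Factorial.fact n)) /\
     (u1 * Derive_n h 1 v1) ^ 2 + u1 * Derive_n h 2 v1 / 3 > 0 /\
     (u1 * Derive_n h 1 v1 * (u2 * Derive_n h 1 v2)) ^ 2 <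
       ((u1 * Derive_n h 1 v1) ^ 2 + u1 * Derive_n h 2 v1 / 3) *
       ((u2 * Derive_n h 1 v2) ^ 2 + u2 * Derive_n h 2 v2 / 3)) /\
  (* consequence *)
  (exists p : params, is_global_min (risk h) p /\ risk h p = 0) /\
  (exists p : params, is_local_min (risk h) p /\ risk h p = 1 / 3).
Proof.
  destruct (admissible_activation_witnesses h Hh)
    as [(v1 & v2 & v3 & v4 & Hfit) (f & v & u1 & u2 & Hdata)].
  split; [exists v1, v2, v3, v4; exact Hfit|].
  split; [exact (condition_ii_of_data h f v u1 u2 Hdata)|].
  split; [exact (global_min_of_exact_fit h v1 v2 v3 v4 Hfit)|].
  exact (local_min_of_data h f v u1 u2 Hdata).
Qed.
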